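(* Let $a\ge 2$ be even, and let $c,e$ be odd integers with $0<c<e\le\frac a2$. Then $U=\{(a,-a),(c,-c),(e,-e)\}\subseteq\mathcal{B}$ is unavoidable.
   Context: The bicyclic inverse semigroup is $\mathcal{B}=\{(a,b)\in\mathbb{Z}\times\mathbb{Z}\mid a\ge 0,\ a+b\ge 0\}$ with multiplication $(a,b)(c,d)=(\max\{c+d,a\}-d,\ b+d)$. A subset $U\subseteq\mathcal{B}$ is called avoidable if $\mathcal{B}$ can be partitioned into two subsets $A$ and $B$ such that no element of $U$ can be written as a product $xy$ of two distinct elements $x\neq y$ both in $A$, or both in $B$. A set is unavoidable if it is not avoidable. *)

From Stdlib Require Import ZArith.
Open Scope Z_scope.

(* Elements of the bicyclic inverse semigroup, represented as pairs of integers. *)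
Definition inB (x : Z * Z) : Prop := 0 <= fst x /\ 0 <= fst x + snd x.

Definition bmul (x y : Z * Z) : Z * Z :=
  (Z.max (fst y + snd y) (fst x) - snd y, snd x + snd y).

(* A partition of B into two parts A and B\A is encoded by the predicate
   "in A"; the second part is its complement within B. Parts may be empty. *)
Definition avoids_by (P : Z * Z -> Prop) (U : Z * Z -> Prop) : Prop :=
  forall x y : Z * Z, inB x -> inB y -> x <> y ->
    (P x <-> P y) -> ~ U (bmul x y).

Definition avoidable (U : Z * Z -> Prop) : Prop :=
  exists P : Z * Z -> Prop, avoids_by P U.

Definition unavoidable (U : Z * Z -> Prop) : Prop := ~ avoidable U.

From Stdlib Require Import ZArith Lia Classical.
Open Scope Z_scope.

(* Three distinct elements q, x, y of B with q x, q y, x y in U cannot be split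
   by a two-part partition, since two of them share a part.  Writing
   a = 2k, c = 2m+1, e = 2j+1, such a triangle is given by q = (p, -p),
   x = (r, -r) and y = (c, p - c) with p = k - j + m and r = k + j - m:
   then q x = (a, -a), q y = (c, -c) and x y = (e, -e). *)

Lemma unavoidable_of_triangle (U : Z * Z -> Prop) (q x y : Z * Z) :
  inB q -> inB x -> inB y -> q <> x -> q <> y -> x <> y ->
  U (bmul q x) -> U (bmul q y) -> U (bmul x y) -> unavoidable U.
Proof.
  intros Iq Ix Iy Nqx Nqy Nxy Uqx Uqy Uxy [P HP].
  destruct (classic (P q)), (classic (P x)), (classic (P y)).
  all: first
    [ apply (HP q x Iq Ix Nqx); tauto
    | apply (HP q y Iq Iy Nqy); tauto
    | apply (HP x y Ix Iy Nxy); tauto ].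
Qed.

Definition diag (n : Z) : Z * Z := (n, - n).

Lemma inB_diag (n : Z) : 0 <= n -> inB (diag n).
Proof. unfold inB, diag; simpl; lia. Qed.

Lemma bmul_diag (p r : Z) : 0 <= p -> bmul (diag p) (diag r) = diag (p + r).
Proof. intros Hp; unfold bmul, diag; simpl; f_equal; lia. Qed.

Lemma bmul_diag_l (p c : Z) : bmul (diag p) (c, p - c) = diag c.
Proof. unfold bmul, diag; simpl; f_equal; lia. Qed.

Lemma bmul_diag_ge (p r c : Z) :
  p <= r -> bmul (diag r) (c, p - c) = diag (r - p + c).
Proof. intros Hpr; unfold bmul, diag; simpl; f_equal; lia. Qed.

Lemma unavoidable_diag_triangle (U : Z * Z -> Prop) (p r c : Z) :
  0 <= c -> 0 <= p < r -> c <> p -> c <> r ->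
  U (diag (p + r)) -> U (diag c) -> U (diag (r - p + c)) -> unavoidable U.
Proof.
  intros Hc Hpr Ncp Ncr U1 U2 U3.
  apply (unavoidable_of_triangle U (diag p) (diag r) (c, p - c)).
  - apply inB_diag; lia.
  - apply inB_diag; lia.
  - unfold inB; simpl; lia.
  - intros E; injection E; lia.
  - intros E; injection E; lia.
  - intros E; injection E; lia.
  - rewrite bmul_diag by lia; exact U1.
  - rewrite bmul_diag_l; exact U2.
  - rewrite bmul_diag_ge by lia; exact U3.
Qed.

Theorem proposition3p4 (a c e : Z) :
  2 <= a -> Z.Even a -> Z.Odd c -> Z.Odd e ->
  0 < c -> c < e -> 2 * e <= a ->
  unavoidable (fun u => u = (a, - a) \/ u = (c, - c) \/ u = (e, - e)).
Proof.
  intros _ [k hk] [m hm] [j hj] hc hce hea.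
  apply (unavoidable_diag_triangle _ (k - j + m) (k + j - m) c); try lia.
  - left; unfold diag; f_equal; lia.
  - right; left; reflexivity.
  - right; right; unfold diag; f_equal; lia.
Qed.
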